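(* In the setting described in the context (iterate $(p,v)$ satisfying the centrality conditions with sufficiently small duality measure $\Xi$), suppose the condensed matrix is computed in floating-point arithmetic as $$\widehat{K}_\gamma = W + \Delta W + (A + \Delta A)^\top (D_\gamma + \Delta D_\gamma)(A + \Delta A) + (H_{\mathcal{N}} + \Delta H_{\mathcal{N}})^\top S_{\mathcal{N}}^{-1} V_{\mathcal{N}} (H_{\mathcal{N}} + \Delta H_{\mathcal{N}}),$$ with $\Delta W = O(\mathbf{u})$, $\Delta H_{\mathcal{N}} = O(\mathbf{u})$, $\Delta A = \Theta(\mathbf{u})$, $\Delta D_\gamma = O(\mathbf{u}\overline{\sigma})$. Then, neglecting second-order terms in the perturbations, the perturbation satisfies $\Delta K_\gamma := \widehat{K}_\gamma - K_\gamma = O(\mathbf{u}\overline{\sigma})$.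
   Context: Problem: minimize $f(x)$ over $x \in \mathbb{R}^n$, $s \in \mathbb{R}^{m_i}$ subject to $g(x) = 0$, $h(x)+s=0$, $s\ge0$, with $g:\mathbb{R}^n\to\mathbb{R}^{m_e}$, $h:\mathbb{R}^n\to\mathbb{R}^{m_i}$, $f$ smooth; $x$ unconstrained. Multipliers $y, z, v$; Lagrangian $L(p,v) = f(x) + y^\top g(x) + z^\top(h(x)+s) - v^\top s$, $p=(x,s,y,z)$. $(p^\star,v^\star)$ is a KKT point satisfying: $\nabla^2_{xx}L$ Lipschitz near $p^\star$, LICQ, strict complementarity and second-order sufficiency. Active set $\mathcal{B} = \{i : h_i(x^\star)=0\}$, inactive set $\mathcal{N}$. Duality measure $\Xi = s^\top v/m_i$; centrality conditions: $\|\nabla_p L(p,v)\|\le C\Xi$, $(s,v)>0$, $s_iv_i\ge\alpha\Xi$ for all $i$ ($C>0$, $\alpha\in(0,1)$ fixed). At the iterate: $W = \nabla^2_{xx}L$, $G=\nabla g(x)$, $H = \nabla h(x)$ with row blocks $H_{\mathcal{B}}, H_{\mathcal{N}}$, $A = \begin{bmatrix} H_{\mathcal{B}}\\ G\end{bmatrix}$, $S_{\mathcal{B}}, V_{\mathcal{B}}, S_{\mathcal{N}}, V_{\mathcal{N}}$ the diagonal matrices of the corresponding entries of $s$ and $v$, $D_\gamma = \begin{bmatrix} S_{\mathcal{B}}^{-1}V_{\mathcal{B}} & 0 \\ 0 & \gamma I\end{bmatrix}$ with $\gamma>0$, and condensed matrix $K_\gamma = W + H_{\mathcal{N}}^\top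 S_{\mathcal{N}}^{-1}V_{\mathcal{N}}H_{\mathcal{N}} + A^\top D_\gamma A$ ($= W + H^\top S^{-1}VH + \gamma G^\top G$). $s_{\min} = \min_{i\in\mathcal{B}} s_i$, $\overline{\sigma} = \max(1/s_{\min}, \gamma)$. $\mathbf{u}$ is the unit roundoff. $O(\cdot)$, $\Theta(\cdot)$: norm bounded above (resp. above and below) by constants independent of the iterate times the argument. *)

From HB Require Import structures.
From mathcomp Require Import all_boot all_order all_algebra.
From mathcomp Require Import all_classical all_reals all_analysis.
Set Implicit Arguments. Unset Strict Implicit. Unset Printing Implicit Defensive.
Import Order.TTheory GRing.Theory Num.Theory.
Import numFieldNormedType.Exports.
Local Open Scope ring_scope.

Section Defs.
Variable R : realType.

(* Jacobian in the usual (m x n) convention: row i = gradient of F_i.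
   The library's 'J F x = lin1_mx ('d F x) is n x m (acts on row vectors). *)
Definition jac n m (F : 'rV[R]_n -> 'rV[R]_m) (x : 'rV[R]_n) : 'M[R]_(m, n) :=
  ('J F x)^T.

Definition sc n (phi : 'rV[R]_n -> R) : 'rV[R]_n -> 'rV[R]_1 :=
  fun x => (phi x)%:M.

Definition grad n (phi : 'rV[R]_n -> R) (x : 'rV[R]_n) : 'rV[R]_n :=
  jac (sc phi) x.

Definition hess n (phi : 'rV[R]_n -> R) (x : 'rV[R]_n) : 'M[R]_n :=
  jac (@grad n phi) x.

Fixpoint Ck n (k : nat) : forall m, ('rV[R]_n -> 'rV[R]_m) -> Prop :=
  match k with
  | 0 => fun m F => continuous F
  | k'.+1 => fun m F =>
      (forall x, differentiable F x) /\ @Ck n k' (m * n)%N (fun x => mxvec (jac F x))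
  end.

Definition smooth n m (F : 'rV[R]_n -> 'rV[R]_m) : Prop := forall k, @Ck n k m F.

Definition dot k (a b : 'rV[R]_k) : R := \sum_(i < k) a 0 i * b 0 i.

Section Problem.
Variables (n me mi : nat) (f : 'rV[R]_n -> R) (g : 'rV[R]_n -> 'rV[R]_me)
  (h : 'rV[R]_n -> 'rV[R]_mi).

(* the x-dependent part of L(p,v) = f + y'g + z'(h+s) - v's *)
Definition lagx (y : 'rV[R]_me) (z : 'rV[R]_mi) (x : 'rV[R]_n) : R :=
  f x + dot y (g x) + dot z (h x).

Definition lag (x : 'rV[R]_n) (s : 'rV[R]_mi) (y : 'rV[R]_me) (z v : 'rV[R]_mi) : R :=
  f x + dot y (g x) + dot z (h x + s) - dot v s.

Definition Wmat (x : 'rV[R]_n) (y : 'rV[R]_me) (z : 'rV[R]_mi) : 'M[R]_n :=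
  hess (lagx y z) x.

(* norm of the gradient of L w.r.t. p = (x,s,y,z) (max of block norms):
   grad_x L, grad_s L = z - v, grad_y L = g(x), grad_z L = h(x) + s *)
Definition normgradL (x : 'rV[R]_n) (s : 'rV[R]_mi) (y : 'rV[R]_me) (z v : 'rV[R]_mi) : R :=
  Num.max (Num.max `|grad (lagx y z) x| `|z - v|) (Num.max `|g x| `|h x + s|).

Definition Xi (s v : 'rV[R]_mi) : R := dot s v / mi%:R.

Definition central (C alpha : R) (x : 'rV[R]_n) (s : 'rV[R]_mi) (y : 'rV[R]_me) (z v : 'rV[R]_mi) : Prop :=
  normgradL x s y z v <= C * Xi s v /\
  (forall i, 0 < s 0 i) /\ (forall i, 0 < v 0 i) /\
  (forall i, alpha * Xi s v <= s 0 i * v 0 i).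

Definition KKT_point (x : 'rV[R]_n) (s : 'rV[R]_mi) (y : 'rV[R]_me) (z v : 'rV[R]_mi) : Prop :=
  normgradL x s y z v = 0 /\
  (forall i, 0 <= s 0 i) /\ (forall i, 0 <= v 0 i) /\ (forall i, s 0 i * v 0 i = 0).

Definition strict_complementarity (s v : 'rV[R]_mi) : Prop :=
  forall i, 0 < s 0 i + v 0 i.

(* LICQ for the constraints g(x)=0, h(x)+s=0, s_i >= 0 (i active, s_i = 0),
   in the variables (x,s): the gradients are linearly independent. *)
Definition LICQ (x : 'rV[R]_n) (s : 'rV[R]_mi) : Prop :=
  forall (la : 'rV[R]_me) (mu nu : 'rV[R]_mi),
    (forall i, s 0 i != 0 -> nu 0 i = 0) ->
    la *m jac g x + mu *m jac h x = 0 -> mu + nu = 0 ->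
    la = 0 /\ mu = 0 /\ nu = 0.

(* second-order sufficient condition in the variables (x,s); the Hessian of L
   w.r.t. (x,s) is blockdiag(W, 0). Critical cone at a KKT point. *)
Definition SOSC (x : 'rV[R]_n) (s : 'rV[R]_mi) (y : 'rV[R]_me) (z v : 'rV[R]_mi) : Prop :=
  forall (dx : 'rV[R]_n) (ds : 'rV[R]_mi),
    (dx != 0 \/ ds != 0) ->
    dx *m (jac g x)^T = 0 ->
    dx *m (jac h x)^T + ds = 0 ->
    (forall i, s 0 i = 0 -> 0 < v 0 i -> ds 0 i = 0) ->
    (forall i, s 0 i = 0 -> v 0 i = 0 -> 0 <= ds 0 i) ->
    0 < (dx *m Wmat x y z *m dx^T) 0 0.

Definition hess_lipschitz_near (xs : 'rV[R]_n) (ys : 'rV[R]_me) (zs : 'rV[R]_mi) : Prop :=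
  exists r Lc : R, 0 < r /\ forall x1 y1 z1 x2 y2 z2,
    `|x1 - xs| <= r -> `|y1 - ys| <= r -> `|z1 - zs| <= r ->
    `|x2 - xs| <= r -> `|y2 - ys| <= r -> `|z2 - zs| <= r ->
    `|Wmat x1 y1 z1 - Wmat x2 y2 z2| <=
      Lc * Num.max `|x1 - x2| (Num.max `|y1 - y2| `|z1 - z2|).

Definition active (xs : 'rV[R]_n) : {set 'I_mi} := [set i | h xs 0 i == 0].

End Problem.

Definition subrows m k (P : {set 'I_m}) (M : 'M[R]_(m, k)) : 'M[R]_(#|P|, k) :=
  \matrix_(i < #|P|, j < k) M (enum_val i) j.
Definition subvec m (P : {set 'I_m}) (u : 'rV[R]_m) : 'rV[R]_#|P| :=
  \row_(i < #|P|) u 0 (enum_val i).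

Section Condensed.
Variables (n me mi : nat) (g : 'rV[R]_n -> 'rV[R]_me) (h : 'rV[R]_n -> 'rV[R]_mi)
  (B : {set 'I_mi}) (gamma : R).
Variables (x : 'rV[R]_n) (s v : 'rV[R]_mi).

Definition HB : 'M[R]_(#|B|, n) := subrows B (jac h x).
Definition HN : 'M[R]_(#|~: B|, n) := subrows (~: B) (jac h x).
Definition Amat : 'M[R]_(#|B| + me, n) := col_mx HB (jac g x).
Definition MN : 'M[R]_(#|~: B|) :=
  diag_mx (\row_(i < _) (((subvec (~: B) s) 0 i)^-1 * (subvec (~: B) v) 0 i)).
Definition Dg : 'M[R]_(#|B| + me) :=
  block_mx (diag_mx (\row_(i < _) (((subvec B s) 0 i)^-1 * (subvec B v) 0 i))) 0 0 (gamma%:M).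

(* sigma_bar = max(1/s_min, gamma), s_min = min_{i in B} s_i *)
Definition sigma_bar : R := \big[Num.max/gamma]_(i in B) (s 0 i)^-1.

Definition Kg (W : 'M[R]_n) : 'M[R]_n :=
  W + (HN^T *m MN *m HN) + (Amat^T *m Dg *m Amat).

Definition Khat (W dW : 'M[R]_n) (dA : 'M[R]_(#|B| + me, n))
    (dD : 'M[R]_(#|B| + me)) (dHN : 'M[R]_(#|~: B|, n)) : 'M[R]_n :=
  W + dW + ((Amat + dA)^T *m (Dg + dD) *m (Amat + dA))
    + ((HN + dHN)^T *m MN *m (HN + dHN)).

(* first-order part of Khat - K (second-order terms in the perturbations
   dropped) *)
Definition dK1 (dW : 'M[R]_n) (dA : 'M[R]_(#|B| + me, n))
    (dD : 'M[R]_(#|B| + me)) (dHN : 'M[R]_(#|~: B|, n)) : 'M[R]_n :=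
  dW + (dA^T *m Dg *m Amat) + (Amat^T *m Dg *m dA) + (Amat^T *m dD *m Amat)
     + (dHN^T *m MN *m HN) + (HN^T *m MN *m dHN).

End Condensed.

End Defs.

From HB Require Import structures.
From mathcomp Require Import all_boot all_order all_algebra.
From mathcomp Require Import all_classical all_reals all_analysis.
From mathcomp Require Import ring lra.
Set Implicit Arguments. Unset Strict Implicit. Unset Printing Implicit Defensive.
Import Order.TTheory GRing.Theory Num.Theory.
Import numFieldNormedType.Exports.
Local Open Scope ring_scope.

(* Each first-order term of [Khat - K] is a triple matrix product, so in the
   entrywise max norm it is bounded by a dimension factor times the product of
   the norms of its factors.  Near the KKT point the Jacobians of [g] and [h] are
   bounded by continuity, [v] stays bounded, and the inactive slacks stay away
   from 0 (they are positive at the KKT point by feasibility), so [A], [H_N] and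
   [S_N^-1 V_N] are O(1); the entries of [D_gamma] are [v_i / s_i] with
   [1 / s_i <= sigma_bar] on the active set, or [gamma <= sigma_bar], so
   [D_gamma] is O(sigma_bar).  The terms containing [dA] or [dD] are thus
   O(u sigma_bar), and those containing [dW] or [dH_N] are
   O(u) <= O(u sigma_bar / gamma). *)

Section MatrixMaxNorm.
Variable K : realDomainType.

Lemma mx_norm_entry_le p q (M : 'M[K]_(p, q)) i j : `|M i j| <= `|M|.
Proof.
rewrite [leRHS]/Num.Def.normr /= mx_normrE.
by apply/bigmax_geP; right; exists (i, j).
Qed.

Lemma mx_norm_le p q (M : 'M[K]_(p, q)) (c : K) :
  0 <= c -> (forall i j, `|M i j| <= c) -> `|M| <= c.
Proof.
move=> c_ge0 M_le; rewrite [leLHS]/Num.Def.normr /= mx_normrE.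
by apply/bigmax_leP; split => // -[i j] _; exact: M_le.
Qed.

Lemma mx_norm_tr p q (M : 'M[K]_(p, q)) : `|M^T| = `|M|.
Proof.
apply/le_anti/andP; split; apply: mx_norm_le => // i j.
  by rewrite mxE mx_norm_entry_le.
by have := mx_norm_entry_le M^T j i; rewrite mxE.
Qed.

Lemma mx_norm_mul p k q (A : 'M[K]_(p, k)) (B : 'M[K]_(k, q)) :
  `|A *m B| <= k%:R * (`|A| * `|B|).
Proof.
apply: mx_norm_le => [|i j]; first by rewrite !mulr_ge0.
rewrite mxE; apply: le_trans (ler_norm_sum _ _ _) _.
rewrite -[k in k%:R]card_ord mulr_natl -sumr_const; apply: ler_sum => l _.
by rewrite normrM ler_pM ?mx_norm_entry_le.
Qed.

Lemma mx_norm_mul3 p k l q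
    (A : 'M[K]_(p, k)) (B : 'M[K]_(k, l)) (C : 'M[K]_(l, q)) :
  `|A *m B *m C| <= (k * l)%:R * (`|A| * `|B| * `|C|).
Proof.
rewrite (_ : _ * _ = l%:R * (k%:R * (`|A| * `|B|) * `|C|)); last first.
  by rewrite natrM; ring.
apply: le_trans (mx_norm_mul _ _) _.
by rewrite ler_wpM2l ?ler_wpM2r ?mx_norm_mul.
Qed.

Lemma mx_norm_col_mx p1 p2 q (A : 'M[K]_(p1, q)) (B : 'M[K]_(p2, q)) :
  `|col_mx A B| <= Num.max `|A| `|B|.
Proof.
apply: mx_norm_le => [|i j]; first by rewrite le_max normr_ge0.
rewrite -(splitK i); case: (fintype.split i) => i' /=.
  by rewrite col_mxEu le_max mx_norm_entry_le.
by rewrite col_mxEd le_max mx_norm_entry_le orbT.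
Qed.

Lemma mx_norm_block_diag p q (A : 'M[K]_p) (D : 'M[K]_q) :
  `|block_mx A 0 0 D| <= Num.max `|A| `|D|.
Proof.
apply: mx_norm_le => [|i j]; first by rewrite le_max normr_ge0.
rewrite -(splitK i) -(splitK j).
case: (fintype.split i) => i'; case: (fintype.split j) => j' /=.
- by rewrite block_mxEul le_max mx_norm_entry_le.
- by rewrite block_mxEur mxE normr0 le_max normr_ge0.
- by rewrite block_mxEdl mxE normr0 le_max normr_ge0.
- by rewrite block_mxEdr le_max mx_norm_entry_le orbT.
Qed.

Lemma mx_norm_diag_mx p (d : 'rV[K]_p) : `|diag_mx d| <= `|d|.
Proof.
apply: mx_norm_le => // i j; rewrite mxE.
by case: (i == j); rewrite ?mulr1n ?mx_norm_entry_le // mulr0n normr0.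
Qed.

Lemma mx_norm_scalar_mx p (a : K) : `|a%:M : 'M[K]_p| <= `|a|.
Proof.
apply: mx_norm_le => // i j; rewrite mxE.
by case: (i == j); rewrite ?mulr1n // mulr0n normr0.
Qed.

Lemma mx_norm_le_mxvec p q (M : 'M[K]_(p, q)) : `|M| <= `|mxvec M|.
Proof. by apply: mx_norm_le => // i j; rewrite -mxvecE mx_norm_entry_le. Qed.

Lemma mx_entry_ge_near p q (M M0 : 'M[K]_(p, q)) (r : K) i j :
  `|M - M0| <= r -> M0 i j - r <= M i j.
Proof.
move=> M_near; have := le_trans (mx_norm_entry_le (M - M0) i j) M_near.
by rewrite !mxE => /ler_distlCBl.
Qed.

End MatrixMaxNorm.

Lemma continuous_bounded_near (K : numFieldType) (V W : normedModType K)
    (G : V -> W) (x0 : V) :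
  {for x0, continuous G} ->
  exists2 r : K, 0 < r & forall x, `|x - x0| <= r -> `|G x| <= `|G x0| + 1.
Proof.
move=> G_cont.
have [e /= e_gt0 G_near] :=
  iffLR (nbhs_normP _ _) (@cvgr_dist_le _ _ _ _ _ G (G x0) G_cont 1 ltr01).
exists (e / 2) => [|x x_near]; first by rewrite divr_gt0.
have /= G_dist : `|G x0 - G x| <= 1.
  apply: G_near; rewrite /= distrC; apply: le_lt_trans x_near _.
  by rewrite ltr_pdivrMr // ltr_pMr // ltr1n.
rewrite -[G x](subKr (G x0)); apply: le_trans (ler_normB _ _) _.
by rewrite lerD2l.
Qed.

Section CondensedFactors.
Variable R : realType.

Lemma mx_norm_subrows m k (P : {set 'I_m}) (M : 'M[R]_(m, k)) :
  `|subrows P M| <= `|M|.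
Proof. by apply: mx_norm_le => // i j; rewrite mxE mx_norm_entry_le. Qed.

Lemma smooth_jac_bounded_near n m (F : 'rV[R]_n -> 'rV[R]_m) (x0 : 'rV[R]_n) :
  smooth F ->
  exists2 r : R, 0 < r &
    forall x, `|x - x0| <= r -> `|jac F x| <= `|mxvec (jac F x0)| + 1.
Proof.
move=> /(_ 1%N) [_ /(_ x0) jac_cont].
have [r r_gt0 jac_near] := continuous_bounded_near jac_cont.
by exists r => // x /jac_near; exact: le_trans (mx_norm_le_mxvec _).
Qed.

Variables (n me mi : nat).
Variables (g : 'rV[R]_n -> 'rV[R]_me) (h : 'rV[R]_n -> 'rV[R]_mi).

Lemma KKT_inactive_slack_gt0 (f : 'rV[R]_n -> R) xs ss ys zs vs i :
  KKT_point f g h xs ss ys zs vs -> i \notin active h xs -> 0 < ss 0 i.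
Proof.
move=> [grad0 [ss_ge0 _]]; rewrite inE => hi.
have : `|h xs + ss| <= 0 by rewrite -grad0 /normgradL !le_max lexx !orbT.
rewrite normr_le0 => /eqP/rowP/(_ i); rewrite !mxE => feasible.
rewrite lt_def ss_ge0 andbT; apply: contra hi => /eqP ss0.
by rewrite -feasible ss0 addr0.
Qed.

Lemma KKT_inactive_slack_lower_bound (f : 'rV[R]_n -> R) xs ss ys zs vs :
  KKT_point f g h xs ss ys zs vs ->
  exists2 m : R, 0 < m & forall i, i \notin active h xs -> m <= ss 0 i.
Proof.
move=> kkt; exists (\big[Num.min/1]_(i | i \notin active h xs) ss 0 i).
  by apply/bigmin_gtP; split => // i; exact: KKT_inactive_slack_gt0 kkt.
by move=> i iB; exact: bigmin_le_cond.
Qed.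

Variables (B : {set 'I_mi}) (gamma : R) (x : 'rV[R]_n) (s v : 'rV[R]_mi).

Lemma sigma_bar_ge_gamma : gamma <= sigma_bar B gamma s.
Proof. by apply/bigmax_geP; left. Qed.

Lemma sigma_bar_ge_inv i : i \in B -> (s 0 i)^-1 <= sigma_bar B gamma s.
Proof. by move=> iB; apply/bigmax_geP; right; exists i. Qed.

Lemma norm_Amat_le : `|Amat g h B x| <= Num.max `|jac h x| `|jac g x|.
Proof.
apply: le_trans (mx_norm_col_mx _ _) _.
by rewrite le_max2 ?mx_norm_subrows.
Qed.

Hypothesis s_gt0 : forall i, 0 < s 0 i.

Lemma norm_Dg_le :
  0 <= gamma -> `|Dg me B gamma s v| <= sigma_bar B gamma s * Num.max `|v| 1.
Proof.
move=> gamma_ge0; have sb_ge0 := le_trans gamma_ge0 sigma_bar_ge_gamma.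
apply: le_trans (mx_norm_block_diag _ _) _; rewrite ge_max; apply/andP; split.
  apply: le_trans (mx_norm_diag_mx _) _; apply: mx_norm_le => [|i j].
    by rewrite mulr_ge0 // le_max ler01 orbT.
  rewrite !mxE normrM ger0_norm ?invr_ge0 ?(ltW (s_gt0 _)) //.
  apply: ler_pM; rewrite ?invr_ge0 ?(ltW (s_gt0 _)) //.
    by rewrite sigma_bar_ge_inv ?enum_valP.
  by rewrite le_max mx_norm_entry_le.
apply: le_trans (mx_norm_scalar_mx _ _) _.
rewrite ger0_norm // -[X in X <= _]mulr1.
by apply: ler_pM; rewrite ?sigma_bar_ge_gamma // le_max lexx orbT.
Qed.

Lemma norm_MN_le (m : R) :
  0 < m -> (forall i, i \notin B -> m <= s 0 i) -> `|MN B s v| <= m^-1 * `|v|.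
Proof.
move=> m_gt0 s_ge; apply: le_trans (mx_norm_diag_mx _) _.
apply: mx_norm_le => [|i j]; first by rewrite mulr_ge0 ?invr_ge0 ?(ltW m_gt0).
rewrite !mxE normrM ger0_norm ?invr_ge0 ?(ltW (s_gt0 _)) //.
apply: ler_pM; rewrite ?invr_ge0 ?(ltW (s_gt0 _)) ?mx_norm_entry_le //.
by rewrite lef_pV2 ?posrE // s_ge //; have := enum_valP j; rewrite inE.
Qed.

End CondensedFactors.

Section FirstOrderPerturbation.
Variables (R : realType) (n me mi : nat).
Variables (g : 'rV[R]_n -> 'rV[R]_me) (h : 'rV[R]_n -> 'rV[R]_mi).
Variables (B : {set 'I_mi}) (gamma : R) (x : 'rV[R]_n) (s v : 'rV[R]_mi).
Variables (dW : 'M[R]_n) (dA : 'M[R]_(#|B| + me, n)) (dD : 'M[R]_(#|B| + me))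
  (dHN : 'M[R]_(#|~: B|, n)).

Local Notation A := (Amat g h B x).
Local Notation D := (Dg me B gamma s v).
Local Notation H := (HN h B x).
Local Notation M := (MN B s v).

Lemma norm_dK1_le :
  `|dK1 g h gamma x s v dW dA dD dHN| <= `|dW|
    + ((#|B| + me) ^ 2)%:R * (2 * (`|dA| * `|D| * `|A|) + `|A| * `|dD| * `|A|)
    + (#|~: B| ^ 2)%:R * (2 * (`|dHN| * `|M| * `|H|)).
Proof.
apply: le_trans (_ : _ <= `|dW|
    + ((#|B| + me) * (#|B| + me))%:R * (`|dA^T| * `|D| * `|A|)
    + ((#|B| + me) * (#|B| + me))%:R * (`|A^T| * `|D| * `|dA|)
    + ((#|B| + me) * (#|B| + me))%:R * (`|A^T| * `|dD| * `|A|)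
    + (#|~: B| * #|~: B|)%:R * (`|dHN^T| * `|M| * `|H|)
    + (#|~: B| * #|~: B|)%:R * (`|H^T| * `|M| * `|dHN|)) _.
  do 5 (apply: le_trans (ler_normD _ _) _; apply: lerD;
        last exact: mx_norm_mul3).
  exact: lexx.
by rewrite !mx_norm_tr le_eqVlt; apply/orP; left; apply/eqP; ring.
Qed.

Definition first_order_bound (k1 k2 : nat) (J V Mb cW cH cA cD : R) : R :=
  (k1 ^ 2)%:R * (2 * `|cA| * V * J + `|cD| * J * J)
  + (`|cW| + (k2 ^ 2)%:R * (2 * `|cH| * Mb * J)) / gamma.

Lemma norm_dK1_le_sigma_bar (J V Mb cW cH cA cD u : R) :
  0 < gamma -> 0 < u ->
  `|A| <= J -> `|H| <= J -> `|D| <= sigma_bar B gamma s * V -> `|M| <= Mb ->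
  `|dW| <= cW * u -> `|dHN| <= cH * u -> `|dA| <= cA * u ->
  `|dD| <= cD * (u * sigma_bar B gamma s) ->
  `|dK1 g h gamma x s v dW dA dD dHN|
    <= first_order_bound (#|B| + me) #|~: B| J V Mb cW cH cA cD
       * (u * sigma_bar B gamma s).
Proof.
move=> gamma_gt0 u_gt0 A_le H_le D_le M_le dW_le dHN_le dA_le dD_le.
set sb := sigma_bar B gamma s.
have sb_gt0 : 0 < sb := lt_le_trans gamma_gt0 (sigma_bar_ge_gamma _ _ _).
have J_ge0 : 0 <= J := le_trans (normr_ge0 _) A_le.
have Mb_ge0 : 0 <= Mb := le_trans (normr_ge0 _) M_le.
have abs_u c : c * u <= `|c| * u := ler_wpM2r (ltW u_gt0) (ler_norm c).
have mul3_le (a b c a' b' c' : R) : 0 <= a -> 0 <= b -> 0 <= c ->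
    a <= a' -> b <= b' -> c <= c' -> a * b * c <= a' * b' * c'.
  by move=> *; apply: ler_pM; rewrite ?mulr_ge0 //; apply: ler_pM.
apply: le_trans norm_dK1_le _.
apply: le_trans (_ : _ <= `|cW| * u
    + ((#|B| + me) ^ 2)%:R
        * (2 * (`|cA| * u * (sb * V) * J) + J * (`|cD| * (u * sb)) * J)
    + (#|~: B| ^ 2)%:R * (2 * (`|cH| * u * Mb * J))) _.
  have dD_le' : `|dD| <= `|cD| * (u * sb).
    apply: le_trans dD_le _; apply: ler_wpM2r (ler_norm _).
    exact: mulr_ge0 (ltW u_gt0) (ltW sb_gt0).
  rewrite !lerD ?ler_wpM2l ?lerD ?ler_wpM2l //; try apply: mul3_le => //.
  - exact: le_trans dW_le (abs_u _).
  - exact: le_trans dA_le (abs_u _).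
  - exact: le_trans dHN_le (abs_u _).
have u_le : u <= u * sb / gamma.
  rewrite ler_pdivlMr // ler_pM2l //; exact: sigma_bar_ge_gamma.
rewrite /first_order_bound.
set P := (X in (X + _ / gamma) * _); set Q := (X in X / gamma).
have Q_ge0 : 0 <= Q by rewrite /Q !(addr_ge0, mulr_ge0).
rewrite [leRHS]mulrDl (_ : Q / gamma * (u * sb) = Q * (u * sb / gamma));
  last by ring.
apply: le_trans (lerD (lexx (P * (u * sb))) (ler_wpM2l Q_ge0 u_le)).
by rewrite le_eqVlt /P /Q; apply/orP; left; apply/eqP; ring.
Qed.

End FirstOrderPerturbation.

Theorem proposition2 (R : realType) (n me mi : nat)
  (f : 'rV[R]_n -> R) (g : 'rV[R]_n -> 'rV[R]_me) (h : 'rV[R]_n -> 'rV[R]_mi)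
  (xs : 'rV[R]_n) (ss : 'rV[R]_mi) (ys : 'rV[R]_me) (zs vs : 'rV[R]_mi)
  (C alpha gamma : R) :
  (0 < mi)%N ->
  smooth (sc f) -> smooth g -> smooth h ->
  KKT_point f g h xs ss ys zs vs ->
  hess_lipschitz_near f g h xs ys zs ->
  LICQ g h xs ss ->
  strict_complementarity ss vs ->
  SOSC f g h xs ss ys zs vs ->
  0 < C -> 0 < alpha < 1 -> 0 < gamma ->
  forall cW cH cAlo cAhi cD : R, 0 < cAlo ->
  exists K0 delta : R, 0 < delta /\
  forall (x : 'rV[R]_n) (s : 'rV[R]_mi) (y : 'rV[R]_me) (z v : 'rV[R]_mi),
    `|x - xs| <= delta -> `|s - ss| <= delta -> `|y - ys| <= delta ->
    `|z - zs| <= delta -> `|v - vs| <= delta ->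
    Xi s v <= delta ->
    central f g h C alpha x s y z v ->
  forall u : R, 0 < u ->
  forall (dW : 'M[R]_n)
         (dA : 'M[R]_(#|active h xs| + me, n))
         (dD : 'M[R]_(#|active h xs| + me))
         (dHN : 'M[R]_(#|~: active h xs|, n)),
    `|dW| <= cW * u ->
    `|dHN| <= cH * u ->
    cAlo * u <= `|dA| <= cAhi * u ->
    `|dD| <= cD * (u * sigma_bar (active h xs) gamma s) ->
    `|dK1 g h gamma x s v dW dA dD dHN|
      <= K0 * (u * sigma_bar (active h xs) gamma s).
Proof.
(* Only the upper half of [dA = Theta(u)] is needed. *)
move=> _ _ g_smooth h_smooth kkt _ _ _ _ _ _ gamma_gt0 cW cH cAlo cAhi cD _.
set B := active h xs.
have [m m_gt0 ss_ge] := KKT_inactive_slack_lower_bound kkt.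
have [rg rg_gt0 jac_g_near] := smooth_jac_bounded_near xs g_smooth.
have [rh rh_gt0 jac_h_near] := smooth_jac_bounded_near xs h_smooth.
set J := Num.max (`|mxvec (jac h xs)| + 1) (`|mxvec (jac g xs)| + 1).
set V := `|vs| + 1.
exists (first_order_bound gamma (#|B| + me) #|~: B| J V ((m / 2)^-1 * V)
          cW cH cAhi cD).
exists (Num.min (Num.min (m / 2) 1) (Num.min rg rh)).
split; first by rewrite !lt_min rg_gt0 rh_gt0 ltr01 divr_gt0.
move=> x s y z v; rewrite !le_min.
move=> /andP[_ /andP[x_rg x_rh]] /andP[/andP[s_near _] _] _ _.
move=> /andP[/andP[_ v_near] _] _ [_ [s_gt0 _]] u u_gt0 dW dA dD dHN.
move=> dW_le dHN_le /andP[_ dA_le] dD_le.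
have v_le : `|v| <= V.
  by rewrite -[v](subrK vs) (le_trans (ler_normD _ _)) // addrC lerD2l.
have s_ge i : i \notin B -> m / 2 <= s 0 i.
  by move=> /ss_ge ss_i; have := mx_entry_ge_near 0 i s_near; lra.
have sb_ge0 : 0 <= sigma_bar B gamma s.
  exact: le_trans (ltW gamma_gt0) (sigma_bar_ge_gamma _ _ _).
apply: norm_dK1_le_sigma_bar => //.
- apply: le_trans (norm_Amat_le _ _ _ _) _.
  exact: le_max2 (jac_h_near _ x_rh) (jac_g_near _ x_rg).
- by rewrite (le_trans (mx_norm_subrows _ _)) // le_max jac_h_near.
- apply: le_trans (norm_Dg_le _ _ _ s_gt0 (ltW gamma_gt0)) _.
  by apply: ler_wpM2l; rewrite // ge_max v_le /= /V lerDr.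
- apply: le_trans (norm_MN_le _ s_gt0 _ s_ge) _; first by rewrite divr_gt0.
  by apply: ler_wpM2l; rewrite // invr_ge0 divr_ge0 // ltW.
Qed.
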